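(* Let $(X,\mathcal{A},\mu)$ be a probability space and let $\{E_i\}_{i\in\mathbb{N}}$ be a sequence of sets in $\mathcal{A}$. Suppose there exist constants $C'>0$, $c>0$ and a sequence of finite sets $\mathcal{S}_k\subset\mathbb{Z}$ with $\min\mathcal{S}_k\to+\infty$ as $k\to\infty$ such that for all sufficiently large $k$: $$\sum_{i\in\mathcal{S}_k}\mu(E_i)\ge c\qquad\text{and}\qquad \sum_{\substack{s<t\\ s,t\in\mathcal{S}_k}}\mu(E_s\cap E_t)\le C'\Big(\sum_{i\in\mathcal{S}_k}\mu(E_i)\Big)^2.$$ Suppose in addition that condition (M1) holds. Then $\mu(E_\infty)=1$.
   Context: $E_\infty:=\limsup_{i\to\infty}E_i=\bigcap_{t=1}^\infty\bigcup_{i=t}^\infty E_i$. Condition (M1): for every $\delta>0$ and all natural numbers $q_1<q_2$ there exists $i_0=i_0(q_1,q_2,\delta)$ such that for all $i\ge i_0$, $$\mu(A\cap E_i)\le(1+\delta)\mu(A)\mu(E_i),\qquad\text{where } A=\bigcup_{j=q_1}^{q_2}E_j.$$ *)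

From HB Require Import structures.
From mathcomp Require Import all_boot all_order all_algebra.
From mathcomp Require Import finmap.
From mathcomp Require Import all_classical all_reals all_analysis.
Set Implicit Arguments. Unset Strict Implicit. Unset Printing Implicit Defensive.
Import Order.TTheory GRing.Theory Num.Theory.

Definition condM1 {d} {T : measurableType d} {R : realType}
  (mu : set T -> \bar R) (E : nat -> set T) : Prop :=
  forall (delta : R), (0 < delta)%R ->
  forall q1 q2 : nat, (q1 < q2)%N ->
  exists i0 : nat, forall i : nat, (i0 <= i)%N ->
    let A := (\bigcup_(j in [set j : nat | (q1 <= j <= q2)%N]) E j)%classic in
    (mu (A `&` E i)%classic <= ((1 + delta)%:E * mu A * mu (E i))%E)%E.

From HB Require Import structures.
From mathcomp Require Import all_boot all_order all_algebra.
From mathcomp Require Import finmap.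
From mathcomp Require Import all_classical all_reals all_analysis.
From mathcomp Require Import measurable_realfun lra zify.
Import Order.TTheory GRing.Theory Num.Theory.
Local Open Scope classical_set_scope.
Local Open Scope ring_scope.

(* Suppose p := mu(E_oo) < 1.  Pick t so that the tail U_{j>=t} E_j has measure
   close to p, and a finite window A = U_{t<=j<=q} E_j carrying almost all of the
   tail's mass.  By (M1) every late E_i meets A in measure at most
   (1 + delta) mu(A) mu(E_i), so E_i \ A keeps the fraction
   beta = 1 - (1 + delta) mu(A) >= (1 - p)/2 of mu(E_i).  On a block S_k of late
   indices the Chung-Erdos inequality and the two hypotheses on S_k then give
   mu(U_{i in S_k} E_i \ A) >= beta^2 / (1/c + 2 C'), a bound independent of t.
   But this union lies in the tail outside A, whose measure can be made as
   small as we like. *)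

Lemma sqr_le_mul_of_quadratic_ge0 (R : realFieldType) (a b p : R) :
  0 <= a -> 0 <= b -> 0 <= p ->
  (forall lam, 0 <= lam -> 2 * lam * b <= a + lam ^+ 2 * p) -> b ^+ 2 <= p * a.
Proof.
move=> a0 b0 p0; have [->|p_neq0] := eqVneq p 0 => quad.
  have [->|b_neq0] := eqVneq b 0; first by rewrite expr0n mul0r.
  have b_gt0 : 0 < b by rewrite lt_def b_neq0.
  have := quad ((a + 1) / b); rewrite divr_ge0 ?addr_ge0 // => /(_ isT).
  by rewrite mulr0 addr0 -mulrA divfK //; lra.
have p_gt0 : 0 < p by rewrite lt_def p_neq0.
have lamp : b / p * p = b by rewrite divfK.
have := quad (b / p); rewrite divr_ge0 // => /(_ isT).
move: lamp; set lam := b / p => lamp h.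
by rewrite expr2 in h *; nra.
Qed.

Lemma indic_sum_quadratic_ge (T : Type) (R : realDomainType) (I : eqType) (s : seq I)
    (F : I -> set T) (lam : R) (x : T) : 0 <= lam ->
  2 * lam * \sum_(i <- s) \1_(F i) x <=
  \sum_(i <- s) \sum_(j <- s) \1_(F i `&` F j) x +
  lam ^+ 2 * \1_(\bigcup_(i in [set` s]) F i) x.
Proof.
move=> lam0; set N := \sum_(i <- s) \1_(F i) x.
have -> : \sum_(i <- s) \sum_(j <- s) \1_(F i `&` F j) x = N * N :> R.
  rewrite mulr_suml; apply: eq_bigr => i _; rewrite mulr_sumr.
  by apply: eq_bigr => j _; rewrite indicI.
have [Ux|nUx] := pselect ((\bigcup_(i in [set` s]) F i) x).
  rewrite indicE mem_set // mulr1.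
  by have := sqr_ge0 (N - lam); rewrite !expr2; nra.
have -> : N = 0.
  rewrite /N big1_seq // => i /andP[_ si].
  by rewrite indicE memNset // => Fix; apply: nUx; exists i.
by rewrite !(mulr0, mul0r, add0r) mulr_ge0 ?sqr_ge0 // indicE.
Qed.

Lemma sum_sym_pairs (V : nmodType) (s : seq nat) (f : nat -> nat -> V) :
  uniq s -> (forall i j, f i j = f j i) ->
  \sum_(i <- s) \sum_(j <- s) f i j =
  \sum_(i <- s) f i i + (\sum_(i <- s) \sum_(j <- s | (i < j)%N) f i j) *+ 2.
Proof.
move=> s_uniq f_sym.
have split_row i : i \in s -> \sum_(j <- s) f i j =
    \sum_(j <- s | (i < j)%N) f i j + (f i i + \sum_(j <- s | (j < i)%N) f i j).
  move=> si; rewrite (bigID (fun j => (i < j)%N)) /=; congr (_ + _).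
  rewrite (bigID (fun j => j == i)) /=; congr (_ + _).
    rewrite (eq_bigl (pred1 i)); last by move=> j /=; case: ltngtP => // ->.
    by rewrite -big_filter filter_pred1_uniq // big_seq1.
  by apply: eq_bigl => j /=; case: ltngtP.
have lower_upper : \sum_(i <- s) \sum_(j <- s | (j < i)%N) f i j =
    \sum_(i <- s) \sum_(j <- s | (i < j)%N) f i j.
  rewrite (exchange_big_dep predT) //=.
  by under eq_bigr do under eq_bigr do rewrite f_sym.
rewrite big_seq (eq_bigr _ split_row) -big_seq !big_split /= lower_upper.
by rewrite addrCA mulr2n addrA.
Qed.

Local Notation window E t q := (\bigcup_(j in [set j : nat | (t <= j <= q)%N]) E j).

Section finite_measure.
Context {d} {T : measurableType d} {R : realType}
  (mu : {finite_measure set T -> \bar R}).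

Lemma fine_measureK (X : set T) : measurable X -> ((fine (mu X))%:E = mu X)%E.
Proof. by move=> mX; rewrite fineK // fin_num_measure. Qed.

Lemma fine_measure_ge0 (X : set T) : 0 <= fine (mu X).
Proof. exact/fine_ge0/measure_ge0. Qed.

Lemma le_fine_measure (X Y : set T) : measurable X -> measurable Y ->
  X `<=` Y -> fine (mu X) <= fine (mu Y).
Proof.
move=> mX mY XY; rewrite -lee_fin !fine_measureK //.
by apply: le_measure; rewrite ?inE.
Qed.

Lemma sum_fine_measure {I : Type} {s : seq I} {P : pred I} {F : I -> set T} :
  (forall i, measurable (F i)) ->
  (\sum_(i <- s | P i) mu (F i) = (\sum_(i <- s | P i) fine (mu (F i)))%:E)%E.
Proof.
by move=> mF; rewrite -sumEFin; apply: eq_bigr => i _; rewrite fine_measureK.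
Qed.

Lemma measurable_indicZ (A : set T) (k : R) : measurable A ->
  measurable_fun [set: T] ((fun x => (k * \1_A x)%:E) : T -> \bar R).
Proof.
move=> mA; apply/measurable_EFinP/measurable_funM; first exact: measurable_cst.
exact: measurable_indic.
Qed.

Lemma integral_indicZ (A : set T) (k : R) : measurable A -> 0 <= k ->
  (\int[mu]_x (k * \1_A x)%:E = (k * fine (mu A))%:E)%E.
Proof.
move=> mA k0; rewrite (integralZl_indic _ (fun=> A)) //; last by rewrite ltNge k0.
by rewrite integral_indic // setIT EFinM fine_measureK.
Qed.

Lemma integral_sum_indicZ (I : Type) (s : seq I) (k : I -> R) (A : I -> set T) :
  (forall i, measurable (A i)) -> (forall i, 0 <= k i) ->
  (\int[mu]_x (\sum_(i <- s) (k i * \1_(A i) x)%:E) =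
   (\sum_(i <- s) k i * fine (mu (A i)))%:E)%E.
Proof.
move=> mA k0; rewrite ge0_integral_sum //; last 2 first.
- by move=> i; exact: measurable_indicZ.
- by move=> i x _; rewrite lee_fin mulr_ge0.
by rewrite -sumEFin; apply: eq_bigr => i _; rewrite integral_indicZ.
Qed.

Lemma sum_measure_quadratic_ge (I : eqType) (s : seq I) (F : I -> set T) (lam : R) :
  (forall i, measurable (F i)) -> 0 <= lam ->
  2 * lam * \sum_(i <- s) fine (mu (F i)) <=
  \sum_(i <- s) \sum_(j <- s) fine (mu (F i `&` F j)) +
  lam ^+ 2 * fine (mu (\bigcup_(i in [set` s]) F i)).
Proof.
move=> mF lam0; set U := \bigcup_(i in _) F i.
have mU : measurable U by exact: fin_bigcup_measurable.
have mFF i j : measurable (F i `&` F j) by exact: measurableI.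
have lam2_ge0 : 0 <= lam ^+ 2 by exact: sqr_ge0.
rewrite -lee_fin EFinD mulr_sumr -(@integral_sum_indicZ _ s (fun=> 2 * lam)) //;
  last by move=> _; rewrite mulr_ge0.
have -> : (\sum_(i <- s) \sum_(j <- s) fine (mu (F i `&` F j)))%:E =
    (\int[mu]_x \sum_(i <- s) \sum_(j <- s) (1 * \1_(F i `&` F j) x)%:E)%E.
  rewrite ge0_integral_sum //; last 2 first.
  - by move=> i; apply: emeasurable_sum => j; exact: measurable_indicZ.
  - by move=> i x _; apply: sume_ge0 => j _; rewrite lee_fin mul1r.
  rewrite -sumEFin; apply: eq_bigr => i _; rewrite integral_sum_indicZ //.
  by congr (_%:E); apply: eq_bigr => j _; rewrite mul1r.
rewrite -(integral_indicZ _ _ mU lam2_ge0).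
rewrite -ge0_integralD //; last 4 first.
- by move=> x _; do 2 apply: sume_ge0 => ? _; rewrite lee_fin mul1r.
- by do 2 apply: emeasurable_sum => ?; exact: measurable_indicZ.
- by move=> x _; rewrite lee_fin mulr_ge0.
- exact: measurable_indicZ.
apply: ge0_le_integral => //.
- by move=> x _; apply: sume_ge0 => i _; rewrite lee_fin !mulr_ge0.
- by apply: emeasurable_sum => i; exact: measurable_indicZ.
- apply: emeasurable_funD; last exact: measurable_indicZ.
  by do 2 apply: emeasurable_sum => ?; exact: measurable_indicZ.
move=> x _; under [X in (_ <= X + _)%E]eq_bigr do rewrite sumEFin.
rewrite !sumEFin -EFinD lee_fin -mulr_sumr.
under [X in _ <= X + _]eq_bigr do under eq_bigr do rewrite mul1r.
exact: indic_sum_quadratic_ge.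
Qed.

Lemma chung_erdos (I : eqType) (s : seq I) (F : I -> set T) :
  (forall i, measurable (F i)) ->
  (\sum_(i <- s) fine (mu (F i))) ^+ 2 <=
  fine (mu (\bigcup_(i in [set` s]) F i)) *
  \sum_(i <- s) \sum_(j <- s) fine (mu (F i `&` F j)).
Proof.
move=> mF; apply: sqr_le_mul_of_quadratic_ge0.
- by do 2 apply: sumr_ge0 => ? _; exact: fine_measure_ge0.
- by apply: sumr_ge0 => ? _; exact: fine_measure_ge0.
- exact: fine_measure_ge0.
- by move=> lam; exact: sum_measure_quadratic_ge.
Qed.

Lemma fine_measureU_le (A U G : set T) :
  measurable A -> measurable U -> measurable G ->
  A `&` U = set0 -> A `<=` G -> U `<=` G ->
  fine (mu A) + fine (mu U) <= fine (mu G).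
Proof.
move=> mA mU mG AU0 AG UG; rewrite -lee_fin EFinD !fine_measureK // -measureU //.
by apply: le_measure; rewrite ?inE //; [exact: measurableU | move=> x [/AG|/UG]].
Qed.

Lemma fine_measure_setD_ge (X Y : set T) (k : R) : measurable X -> measurable Y ->
  (mu (Y `&` X) <= k%:E * mu Y * mu X)%E ->
  (1 - k * fine (mu Y)) * fine (mu X) <= fine (mu (X `\` Y)).
Proof.
move=> mX mY; rewrite setIC => XY_le.
have mXY : measurable (X `&` Y) by exact: measurableI.
have {}XY_le : fine (mu (X `&` Y)) <= k * fine (mu Y) * fine (mu X).
  by rewrite -lee_fin !EFinM !fine_measureK.
have -> : fine (mu (X `\` Y)) = fine (mu X) - fine (mu (X `&` Y)).
  apply: EFin_inj; rewrite EFinB !fine_measureK //; last exact: measurableD.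
  by rewrite measureD //; have /fin_numPlt/andP[_ ->] := fin_num_measure mu X mX.
by rewrite mulrBl mul1r lerB.
Qed.

Lemma fine_measure_bigcup_ge {s : seq nat} {E F : nat -> set T} {beta c C' : R} :
  uniq s -> (forall i, measurable (E i)) -> (forall i, measurable (F i)) ->
  (forall i, F i `<=` E i) -> 0 <= beta ->
  (forall i, i \in s -> beta * fine (mu (E i)) <= fine (mu (F i))) ->
  0 < c -> c <= \sum_(i <- s) fine (mu (E i)) ->
  \sum_(i <- s) \sum_(j <- s | (i < j)%N) fine (mu (E i `&` E j)) <=
    C' * (\sum_(i <- s) fine (mu (E i))) ^+ 2 ->
  beta ^+ 2 <= fine (mu (\bigcup_(i in [set` s]) F i)) * (c^-1 + 2 * C').
Proof.
move=> s_uniq mE mF FE beta_ge0 beta_le c_gt0.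
set B := \sum_(i <- s) fine (mu (E i)).
set Q := \sum_(i <- s) \sum_(j <- s | _) _ => cB QB.
have B_gt0 : 0 < B by exact: lt_le_trans c_gt0 cB.
have betaB : beta * B <= \sum_(i <- s) fine (mu (F i)).
  by rewrite mulr_sumr big_seq [leRHS]big_seq; apply: ler_sum.
have pairs_le : \sum_(i <- s) \sum_(j <- s) fine (mu (F i `&` F j)) <= B + Q *+ 2.
  rewrite /B /Q -(eq_bigr _ (fun i _ => congr1 (fine \o mu) (setIid (E i)))).
  rewrite -sum_sym_pairs //; last by move=> i j; rewrite setIC.
  do 2 apply: ler_sum => ? _; apply: le_fine_measure; try exact: measurableI.
  exact: setISS.
have B_le : B <= c^-1 * B ^+ 2.
  by rewrite expr2 mulrA ler_pMl // mulrC ler_pdivlMr // mul1r.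
have betaB2 : (beta * B) ^+ 2 <= (\sum_(i <- s) fine (mu (F i))) ^+ 2.
  by rewrite !expr2; apply: ler_pM => //; rewrite mulr_ge0 // ltW.
have U_ge0 := fine_measure_ge0 (\bigcup_(i in [set` s]) F i).
(* (beta B)^2 <= (sum mu F)^2 <= mu U * sum mu (F i & F j) <= mu U * (B + 2 Q)
   <= mu U * B^2 (1/c + 2 C') *)
rewrite -(@ler_pM2r _ (B ^+ 2)) ?exprn_gt0 // -exprMn.
apply: (le_trans betaB2); apply: (le_trans (@chung_erdos _ s F mF)).
rewrite -mulrA ler_wpM2l //; rewrite mulr2n in pairs_le; lra.
Qed.

Lemma exists_fine_measure_near {F : nat -> set T} {X : set T} {eta : R} :
  measurable X -> 0 < eta -> mu (F n) @[n --> \oo] --> mu X ->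
  exists n, `|fine (mu X) - fine (mu (F n))| < eta.
Proof.
move=> mX eta_gt0; rewrite -[X in _ --> X](fine_measureK _ mX) => /fine_cvgP[_].
move=> /cvgr_dist_lt/(_ _ eta_gt0)[N _ near_N].
by exists N; exact: (near_N N (leqnn N)).
Qed.

Lemma measurable_lim_sup_set (E : nat -> set T) :
  (forall i, measurable (E i)) -> measurable (lim_sup_set E).
Proof.
move=> mE; apply: bigcap_measurable; first by exists 0.
by move=> k _; exact: bigcup_measurable.
Qed.

Lemma exists_tail_measure_lt (E : nat -> set T) (eta : R) :
  (forall i, measurable (E i)) -> 0 < eta ->
  exists t, fine (mu (\bigcup_(j >= t) E j)) < fine (mu (lim_sup_set E)) + eta.
Proof.
move=> mE eta_gt0.
have mG0 : measurable (\bigcup_(j >= 0) E j) by exact: bigcup_measurable.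
have G0_fin : (mu (\bigcup_(j >= 0) E j) < +oo)%E.
  by rewrite -(fine_measureK _ mG0) ltry.
have mLS := measurable_lim_sup_set E mE.
have cvgG := lim_sup_set_cvg mu E mE G0_fin.
have [t /ltr_distlCDr] := exists_fine_measure_near mLS eta_gt0 cvgG.
by exists t.
Qed.

Lemma exists_window_measure_gt (E : nat -> set T) (t : nat) (eta : R) :
  (forall i, measurable (E i)) -> 0 < eta ->
  exists2 q, (t < q)%N &
    fine (mu (\bigcup_(j >= t) E j)) - eta < fine (mu (window E t q)).
Proof.
move=> mE eta_gt0; pose H n := window E t (t + n.+1).
have mH n : measurable (H n) by exact: bigcup_measurable.
have mG : measurable (\bigcup_(j >= t) E j) by exact: bigcup_measurable.
have UH : \bigcup_n H n = \bigcup_(j >= t) E j.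
  apply/seteqP; split => x; first by move=> [n _ [j /= /andP[tj _] Ejx]]; exists j.
  move=> [j /= tj Ejx]; exists (j - t)%N => //; exists j => //=.
  by apply/andP; split => //; lia.
have ndH : nondecreasing_seq H.
  move=> a b ab; apply/subsetPset => x [j /= /andP[tj jb] Ejx].
  by exists j => //=; apply/andP; split => //; lia.
have := nondecreasing_cvg_mu (mu := mu) mH _ ndH; rewrite UH => /(_ mG) cvgH.
have [n /ltr_distlBl] := exists_fine_measure_near mG eta_gt0 cvgH.
by exists (t + n.+1)%N => //; lia.
Qed.

End finite_measure.

Section quasi_independence.
Context {d} {T : measurableType d} {R : realType}
  (mu : {finite_measure set T -> \bar R}) {E : nat -> set T} {C' c : R}
  {S : nat -> {fset nat}}.
Hypotheses (mE : forall i, measurable (E i)) (hc : 0 < c) (hC' : 0 < C').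
Hypothesis hSmin : forall M : nat, exists k0 : nat, forall k, (k0 <= k)%N ->
  forall i, i \in S k -> (M <= i)%N.
Hypothesis hS : exists k0 : nat, forall k, (k0 <= k)%N ->
  (c%:E <= \sum_(i <- S k) mu (E i))%E /\
  (\sum_(s <- S k) \sum_(t <- S k | (s < t)%N) mu (E s `&` E t)
     <= C'%:E * ((\sum_(i <- S k) mu (E i)) * (\sum_(i <- S k) mu (E i))))%E.
Hypothesis hM1 : condM1 mu E.

Lemma window_gain (t q : nat) (delta : R) : (t < q)%N -> 0 < delta ->
  0 <= 1 - (1 + delta) * fine (mu (window E t q)) ->
  (1 - (1 + delta) * fine (mu (window E t q))) ^+ 2 <=
  (fine (mu (\bigcup_(j >= t) E j)) - fine (mu (window E t q))) * (c^-1 + 2 * C').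
Proof.
move=> tq delta_gt0; set A := window E t q; set beta := 1 - _ => beta_ge0.
have mA : measurable A by exact: bigcup_measurable.
have mG : measurable (\bigcup_(j >= t) E j) by exact: bigcup_measurable.
have [i0 M1_i0] := hM1 _ delta_gt0 _ _ tq.
have [k0 S_large] := hSmin (maxn t i0).
have [k1 S_bounds] := hS; pose k := maxn k0 k1.
have S_ge i : i \in S k -> (t <= i)%N /\ (i0 <= i)%N.
  by move=> /(S_large k (leq_maxl _ _)); rewrite geq_max => /andP.
have [cB QB] := S_bounds k (leq_maxr _ _).
rewrite sum_fine_measure // lee_fin in cB.
move: QB; under eq_bigr => i _ do
  rewrite (sum_fine_measure mu (fun j => measurableI _ _ (mE i) (mE j))).
rewrite sumEFin sum_fine_measure // -!EFinM lee_fin => QB.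
pose F i := E i `\` A; have mF i : measurable (F i) by exact: measurableD.
have beta_le i : i \in S k -> beta * fine (mu (E i)) <= fine (mu (F i)).
  by move=> /S_ge[_ i0i]; apply: fine_measure_setD_ge => //; exact: M1_i0.
have := fine_measure_bigcup_ge mu (fset_uniq (S k)) mE mF (fun i => @subDsetl _ _ _)
  beta_ge0 beta_le hc cB QB.
set U := \bigcup_(i in _) F i => gain; apply: (le_trans gain).
have mU : measurable U by exact: fin_bigcup_measurable.
rewrite ler_pM2r ?addr_gt0 ?invr_gt0 ?mulr_gt0 // lerBrDl.
apply: fine_measureU_le => //.
- by apply/seteqP; split => // x [Ax [i _ [_ /(_ Ax)]]].
- by move=> x [j /= /andP[tj _] Ejx]; exists j.
- by move=> x [i /S_ge[ti _] [Eix _]]; exists i.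
Qed.

Lemma lim_sup_window_gain (delta eta : R) : 0 < delta -> 0 < eta ->
  exists t q, [/\ (t < q)%N,
    fine (mu (window E t q)) < fine (mu (lim_sup_set E)) + eta &
    0 <= 1 - (1 + delta) * fine (mu (window E t q)) ->
    (1 - (1 + delta) * fine (mu (window E t q))) ^+ 2 < eta * (c^-1 + 2 * C')].
Proof.
move=> delta_gt0 eta_gt0.
have [t G_lt] := exists_tail_measure_lt mu E eta mE eta_gt0.
have [q tq G_gt] := exists_window_measure_gt mu E t eta mE eta_gt0.
have window_le : fine (mu (window E t q)) <= fine (mu (\bigcup_(j >= t) E j)).
  apply: le_fine_measure; try exact: bigcup_measurable.
  by move=> x [j /= /andP[tj _] Ejx]; exists j.
exists t, q; split => // [|beta_ge0]; first exact: le_lt_trans G_lt.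
apply: (le_lt_trans (window_gain _ _ _ tq delta_gt0 beta_ge0)).
by rewrite ltr_pM2r ?addr_gt0 ?invr_gt0 ?mulr_gt0 //; lra.
Qed.

End quasi_independence.

Local Close Scope ring_scope.

Theorem theorem2 (d : measure_display) (T : measurableType d) (R : realType)
  (mu : probability T R) (E : nat -> set T)
  (mE : forall i, measurable (E i))
  (C' c : R) (hC' : (0 < C')%R) (hc : (0 < c)%R)
  (S : nat -> {fset nat})
  (hSmin : forall M : nat, exists k0 : nat, forall k, (k0 <= k)%N ->
             forall i, i \in S k -> (M <= i)%N)
  (hS : exists k0 : nat, forall k, (k0 <= k)%N ->
     (c%:E <= \sum_(i <- S k) mu (E i))%E /\
     (\sum_(s <- S k) \sum_(t <- S k | (s < t)%N) mu (E s `&` E t)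
        <= C'%:E * ((\sum_(i <- S k) mu (E i)) * (\sum_(i <- S k) mu (E i))))%E)
  (hM1 : condM1 mu E) :
  mu (lim_sup_set E) = 1%E.
Proof.
Local Open Scope ring_scope.
have mLS := measurable_lim_sup_set E mE.
apply/eqP; rewrite eq_le probability_le1 //= -(fine_measureK mu _ mLS) lee_fin.
set p := fine _; rewrite leNgt; apply/negP => p_lt1.
pose r := (1 - p) / 4; pose K := c^-1 + 2 * C'.
have r_gt0 : 0 < r by rewrite divr_gt0 // subr_gt0.
have K_gt0 : 0 < K by rewrite addr_gt0 ?invr_gt0 ?mulr_gt0.
pose eta := Num.min (4 * r ^+ 2 / K) r.
have eta_gt0 : 0 < eta by rewrite lt_min r_gt0 andbT divr_gt0 // mulr_gt0 // exprn_gt0.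
have [t [q [tq a_lt gain]]] :=
  lim_sup_window_gain mu mE hc hC' hSmin hS hM1 _ _ r_gt0 eta_gt0.
move: a_lt gain; rewrite -/p; set a := fine (mu _) => a_lt gain.
(* [1 - (1 + r) a >= 2 r] since [a < p + r], while [eta K <= 4 r^2]. *)
have a_le1 : a <= 1.
  by rewrite -lee_fin fine_measureK ?probability_le1 //; exact: bigcup_measurable.
have ra_le : r * a <= r by rewrite ler_piMr // ltW.
have eta_le_r : eta <= r by rewrite ge_min lexx orbT.
have r4 : 4 * r = 1 - p by rewrite mulrC divfK.
have beta_ge : 2 * r <= 1 - (1 + r) * a by lra.
have beta2 : (2 * r) ^+ 2 <= (1 - (1 + r) * a) ^+ 2.
  by apply: lerXn2r; rewrite // nnegrE; lra.
have eta_K : eta * K <= 4 * r ^+ 2 by rewrite -ler_pdivlMr // ge_min lexx.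
have := lt_le_trans (le_lt_trans beta2 (gain ltac:(lra))) eta_K.
by rewrite exprMn -natrX ltxx.
Qed.
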